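(* Let $k\ge 3$ and let $V$ be a finite subset of $\mathbb R$ that is optimal for $k$-term arithmetic progressions. Let $(V_1<V_2<\cdots<V_{k-1})$ be a $\le$-orderly, balanced $(k-1)$-decomposition of $V$. Then both $\bigcup_{j=1}^{k-2}V_j$ and $\bigcup_{j=2}^{k-1}V_j$ are optimal for $(k-1)$-term arithmetic progressions.
   Context: A $k$-term arithmetic progression is a set $\{a,a+d,\dots,a+(k-1)d\}\subseteq\mathbb R$ with $d>0$; $S_{\mathcal A_k}(V)$ is the number of them contained in $V$. An $m$-set $V$ is optimal for $k$-term arithmetic progressions if $S_{\mathcal A_k}(V)$ equals the maximum of $S_{\mathcal A_k}(W)$ over all $m$-subsets $W\subseteq\mathbb R$, namely $(m-r)(m+r-k+1)/(2k-2)$ with $r$ the remainder of $m$ modulo $k-1$. For $A,B\subseteq\mathbb R$, $A<B$ means $a<b$ for all $a\in A$, $b\in B$. A $\le$-orderly $\ell$-decomposition of $V$ is a family $(V_1,\dots,V_\ell)$ of pairwise disjoint, possibly empty subsets with union $V$ such that $V_1<V_2<\cdots<V_\ell$; it is balanced if each $V_i$ has $\lfloor |V|/\ell\rfloor$ or $\lceil |V|/\ell\rceil$ elements. *)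

(* Finite subsets of the real line are modelled as
   duplicate-free sequences over an arbitrary real field R. *)
From HB Require Import structures.
From mathcomp Require Import all_boot all_order all_algebra.
Set Implicit Arguments. Unset Strict Implicit. Unset Printing Implicit Defensive.
Import Order.TTheory GRing.Theory Num.Theory.
Local Open Scope ring_scope.

(* S_{A_k}(V): number of k-term APs {a, a+d, ..., a+(k-1)d}, d > 0, contained
   in V.  Such an AP is identified with its parameters (a, d); we enumerate
   a = first term in V and d = b - a with b (second term) in V, b > a. *)
Definition numAP (R : realFieldType) (k : nat) (V : seq R) : nat :=
  count (fun p : R * R =>
           (p.1 < p.2) && all (fun i : nat => p.1 + i%:R * (p.2 - p.1) \in V) (iota 0 k))
        [seq (a, b) | a <- V, b <- V].

Definition optimalAP (R : realFieldType) (k : nat) (V : seq R) : Prop :=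
  uniq V /\ forall W : seq R, uniq W -> size W = size V -> (numAP k W <= numAP k V)%N.

(* (Vs 0, ..., Vs (l-1)) is a <=-orderly l-decomposition of V
   (indices shifted by one w.r.t. the paper: Vs i is V_{i+1}). *)
Definition orderly_decomp (R : realFieldType) (l : nat) (V : seq R) (Vs : nat -> seq R) : Prop :=
  [/\ forall i, (i < l)%N -> uniq (Vs i),
      forall i j, (i < j)%N -> (j < l)%N -> forall x y, x \in Vs i -> y \in Vs j -> x < y
      (* disjointness follows from the ordering condition *)
    & V =i flatten [seq Vs i | i <- iota 0 l] ].

Definition balanced_decomp (R : realFieldType) (l : nat) (V : seq R) (Vs : nat -> seq R) : Prop :=
  forall i, (i < l)%N ->
    size (Vs i) = (size V %/ l)%N \/ size (Vs i) = ((size V + l.-1) %/ l)%N.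

From mathcomp Require Import all_boot all_order all_algebra.
From mathcomp Require Import ring zify.
Set Implicit Arguments. Unset Strict Implicit. Unset Printing Implicit Defensive.
Import Order.TTheory GRing.Theory Num.Theory.

(* If V = A ++ B with A < B, a (c+2)-term progression in V has either its
   first c+1 terms in A or its last two terms in B, so
   S_{c+2}(V) <= S_{c+1}(A) + C(|B|, 2).  Applied to a sorted set with B its top
   |V| %/ (c+1) elements, this proves by induction on c that the explicit
   count maxAP c |V| is an upper bound for S_{c+1}(V); the interval
   {0, ..., m-1} attains it.  When |B| is a balanced block size,
   maxAP (c+1) |V| = maxAP c |A| + C(|B|, 2), so if V is optimal the inequality
   forces S_{c+1}(A) >= maxAP c |A|, i.e. A is optimal; symmetrically for the
   last blocks. *)

(* maxAP c m is the maximum number of (c+1)-term progressions in an m-set,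
   i.e. (m - r)(m + r - c) / (2c) with r = m %% c. *)
Definition maxAP (c m : nat) : nat := c * 'C(m %/ c, 2) + (m %% c) * (m %/ c).

Lemma maxAPE c q r : 0 < c -> r <= c -> maxAP c (q * c + r) = c * 'C(q, 2) + r * q.
Proof.
move=> c_gt0; rewrite leq_eqVlt => /orP[/eqP -> | rc].
  by rewrite /maxAP -mulSnr mulnK // modnMl binS bin1 mul0n addn0 mulnDr.
by rewrite /maxAP divnMDl // modnMDl divn_small // modn_small // addn0.
Qed.

Lemma maxAP_sum c m : 0 < c -> maxAP c m = sumn [seq j %/ c | j <- iota 0 m].
Proof.
move=> c_gt0; elim: m => [|m IH]; first by rewrite /maxAP div0n mod0n bin0n /= muln0.
rewrite -addn1 iotaD map_cat sumn_cat -IH /= addn0 add0n.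
have r_lt := ltn_pmod m c_gt0.
move: (divn_eq m c) r_lt; set q := m %/ c; set r := m %% c => em r_lt.
by rewrite em -addnA !maxAPE // ?(ltnW r_lt) //; lia.
Qed.

(* b is the size of a block of a balanced (c+1)-decomposition of an m-set. *)
Lemma maxAP_peel c m b : 0 < c -> b = m %/ c.+1 \/ b = (m + c) %/ c.+1 ->
  maxAP c.+1 m = maxAP c (m - b) + 'C(b, 2).
Proof.
move=> c_gt0 hb; have r_lt := ltn_pmod m (ltn0Sn c).
move: (divn_eq m c.+1) r_lt hb; set q := m %/ c.+1; set r := m %% c.+1 => em r_lt hb.
have [eb | [r_gt0 eb]] : b = q \/ (0 < r /\ b = q.+1).
- case: hb => [|->]; first by left.
  case: r em r_lt => [|r] -> r_lt.
    by left; rewrite addn0 divnMDl // divn_small ?addn0.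
  right; split=> //.
  have -> : q * c.+1 + r.+1 + c = q.+1 * c.+1 + r by rewrite mulSn; lia.
  by rewrite divnMDl // divn_small ?addn0 // ltnW.
- have -> : m - b = q * c + r by rewrite em eb mulnS; lia.
  by rewrite em eb !maxAPE ?(ltnW r_lt) //; nia.
- have -> : m - b = q * c + r.-1 by rewrite em eb mulnS; lia.
  by rewrite em eb !maxAPE ?binS ?bin1 ?(ltnW r_lt) //; nia.
Qed.

Lemma count_le_inj (T1 T2 : eqType) (s : seq T1) (t : seq T2)
    (P : pred T1) (Q : pred T2) (f : T1 -> T2) :
  uniq s -> {in s &, injective f} ->
  (forall x, x \in s -> P x -> (f x \in t) && Q (f x)) -> count P s <= count Q t.
Proof.
move=> us injf H; rewrite -!size_filter -(size_map f); apply: uniq_leq_size.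
  rewrite map_inj_in_uniq ?filter_uniq // => x y.
  by rewrite !mem_filter => /andP[_ xs] /andP[_ ys]; apply: injf.
move=> y /mapP[x]; rewrite mem_filter => /andP[Px xs] ->.
by rewrite mem_filter andbC; apply: H.
Qed.

Lemma count_allpairs (T1 T2 : Type) (P : pred (T1 * T2)) (s : seq T1) (t : seq T2) :
  count P [seq (x, y) | x <- s, y <- t] = sumn [seq count (fun y => P (x, y)) t | x <- s].
Proof. by elim: s => // x s IH; rewrite allpairs_cons count_cat count_map IH. Qed.

Lemma sumn_mapD (T : Type) (f g : T -> nat) (s : seq T) :
  sumn [seq f x + g x | x <- s] = sumn (map f s) + sumn (map g s).
Proof. by elim: s => //= x s ->; rewrite addnACA. Qed.

Local Open Scope ring_scope.

Section Progressions.
Variable R : realFieldType.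
Implicit Types (a b : R) (V W : seq R).

Local Notation pairs V := [seq (x, y) | x <- V, y <- V].

Definition ap_term a b (i : nat) : R := a + i%:R * (b - a).

Definition isAP (k : nat) V (p : R * R) : bool :=
  (p.1 < p.2) && all (fun i => ap_term p.1 p.2 i \in V) (iota 0 k).

Lemma numAPE k V : numAP k V = count (isAP k V) (pairs V).
Proof. by []. Qed.

Lemma ap_term0 a b : ap_term a b 0 = a.
Proof. by rewrite /ap_term mul0r addr0. Qed.

Lemma ap_term1 a b : ap_term a b 1 = b.
Proof. by rewrite /ap_term mul1r addrC subrK. Qed.

Lemma ap_termS a b i : ap_term a b i.+1 = ap_term a b i + (b - a).
Proof. by rewrite /ap_term -addn1 natrD; ring. Qed.

Lemma ap_term_shift a b i j :
  ap_term (ap_term a b i) (ap_term a b i.+1) j = ap_term a b (i + j).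
Proof. by rewrite ap_termS /ap_term natrD; ring. Qed.

Lemma ler_ap_term a b i j : a < b -> (ap_term a b i <= ap_term a b j) = (i <= j)%N.
Proof. by move=> ab; rewrite lerD2l ler_pM2r ?subr_gt0 // ler_nat. Qed.

Lemma ltr_ap_term a b i j : a < b -> (ap_term a b i < ap_term a b j) = (i < j)%N.
Proof. by move=> ab; rewrite ltrD2l ltr_pM2r ?subr_gt0 // ltr_nat. Qed.

Lemma ap_pair_inj i : injective (fun p : R * R => (ap_term p.1 p.2 i, ap_term p.1 p.2 i.+1)).
Proof.
move=> [a b] [a' b'] /= [e1 e2].
have ed : b - a = b' - a' by move: e2; rewrite !ap_termS e1 => /addrI.
have ea : a = a' by move: e1; rewrite /ap_term ed => /addIr.
by move: ed; rewrite ea => /addIr ->.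
Qed.

Lemma isAPP k V a b :
  reflect (a < b /\ forall i, (i < k)%N -> ap_term a b i \in V) (isAP k V (a, b)).
Proof.
apply: (iffP andP) => -[ab H]; split=> //.
  by move=> i ik; apply: (allP H); rewrite mem_iota.
by apply/allP => i; rewrite mem_iota => /H.
Qed.

Lemma isAP_pairs k V p : (1 < k)%N -> isAP k V p -> p \in pairs V.
Proof.
case: p => a b k_gt1 /isAPP[_ H].
apply: allpairs_f; first by rewrite -(ap_term0 a b); apply/H/ltnW.
by rewrite -(ap_term1 a b); apply: H.
Qed.

Lemma isAP_prefix k l V p : (k <= l)%N -> isAP l V p -> isAP k V p.
Proof.
case: p => a b kl /isAPP[ab H]; apply/isAPP; split=> // i ik.
by apply: H; apply: leq_trans kl.
Qed.

Lemma isAP_shift i k V a b :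
  isAP (i + k) V (a, b) -> isAP k V (ap_term a b i, ap_term a b i.+1).
Proof.
move=> /isAPP[ab H]; apply/isAPP; split=> [|j jk]; first by rewrite ltr_ap_term.
by rewrite ap_term_shift; apply: H; rewrite ltn_add2l.
Qed.

Lemma uniq_pairs V : uniq V -> uniq (pairs V).
Proof. by move=> uV; apply: allpairs_uniq => // -[? ?] [? ?]. Qed.

Lemma count_isAP_le k l V W (P : pred (R * R)) (f : R * R -> R * R) :
  injective f -> uniq V -> (1 < l)%N ->
  (forall p, P p -> isAP k V p -> isAP l W (f p)) ->
  (count (predI P (isAP k V)) (pairs V) <= numAP l W)%N.
Proof.
move=> injf uV l_gt1 H; apply: count_le_inj; first exact: uniq_pairs.
  by move=> p q _ _; apply: injf.
move=> p _ /andP[Pp /(H p Pp) APf].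
by apply/andP; split; [apply: isAP_pairs APf | apply: APf].
Qed.

Section OrderedSplit.
Variables V A B : seq R.
Hypotheses (uV : uniq V) (eV : V =i A ++ B)
  (ltAB : forall x y, x \in A -> y \in B -> x < y).

Lemma mem_lower x y : x \in V -> y \in A -> x <= y -> x \in A.
Proof.
rewrite eV mem_cat => /orP[// | xB] yA; have := ltAB yA xB.
by rewrite ltNge => /negPf->.
Qed.

Lemma isAP_lower k a b : ap_term a b k \in A -> isAP k.+1 V (a, b) -> isAP k.+1 A (a, b).
Proof.
move=> kA /isAPP[ab H]; apply/isAPP; split=> // i ik.
by apply: mem_lower (H i ik) kA _; rewrite ler_ap_term.
Qed.

Lemma isAP_upper k a b : a \notin A -> isAP k V (a, b) -> isAP k B (a, b).
Proof.
move=> aA /isAPP[ab H]; apply/isAPP; split=> // i ik.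
have := H i ik; rewrite eV mem_cat => /orP[iA | //].
have aV : a \in V by rewrite -(ap_term0 a b); apply/H/(leq_ltn_trans _ ik).
have a_le : a <= ap_term a b i by rewrite -{1}(ap_term0 a b) ler_ap_term.
by rewrite (mem_lower aV iA a_le) in aA.
Qed.

(* A progression with i + j + 1 terms has its first i + 1 terms in A exactly
   when its term of index i is in A; otherwise its last j + 1 terms are in B. *)
Lemma numAP_cat_le i j : (0 < i)%N -> (0 < j)%N ->
  (numAP (i + j).+1 V <= numAP i.+1 A + numAP j.+1 B)%N.
Proof.
move=> i_gt0 j_gt0; rewrite numAPE -size_filter.
rewrite -(count_predC (fun p : R * R => ap_term p.1 p.2 i \in A)) !count_filter.
apply: leq_add.
  apply: (count_isAP_le (f := id)) => // -[a b] /= iA APab.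
  by apply: isAP_lower iA (isAP_prefix _ APab); rewrite ltnS leq_addr.
apply: (count_isAP_le (@ap_pair_inj i)) => // -[a b] /= iA.
by rewrite -addnS => /isAP_shift; apply: isAP_upper.
Qed.

End OrderedSplit.

Lemma sumn_count_lt V : uniq V ->
  sumn [seq count (fun y => x < y) V | x <- V] = 'C(size V, 2).
Proof.
elim: V => //= x V IH /andP[xV uV].
rewrite ltxx add0n sumn_mapD IH // sumn_count binS bin1 addnA addnC; congr (_ + _)%N.
rewrite -(count_predC (fun y => x < y)); congr (_ + _)%N.
apply: eq_in_count => y yV /=; rewrite -leNgt le_eqVlt.
by have /negPf-> : y != x by apply: contraNneq xV => <-.
Qed.

Lemma numAP2_le V : uniq V -> (numAP 2 V <= 'C(size V, 2))%N.
Proof.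
move=> uV; rewrite -sumn_count_lt //.
have -> : sumn [seq count (fun y => x < y) V | x <- V] =
          count (fun p : R * R => p.1 < p.2) (pairs V) by rewrite count_allpairs.
by apply: sub_count => -[a b] /andP[].
Qed.

Lemma take_drop_lt (s : seq R) t x y : sorted <%R s ->
  x \in take t s -> y \in drop t s -> x < y.
Proof.
rewrite lt_sorted_pairwise -{1}(cat_take_drop t s) pairwise_cat.
by case/and3P=> /allrelP H _ _; apply: H.
Qed.

Lemma numAP_le_maxAP c V : (0 < c)%N -> uniq V -> (numAP c.+1 V <= maxAP c (size V))%N.
Proof.
elim: c V => [//|c IH] V _ uV; case: c IH => [|c] IH.
  by rewrite /maxAP divn1 modn1 mul1n mul0n addn0; apply: numAP2_le.
set m := size V; set b := (m %/ c.+2)%N; set s := sort <=%R V.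
have ps : perm_eq s V by rewrite perm_sort.
have us : uniq s by rewrite sort_uniq.
have sm : size s = m by rewrite (perm_size ps).
have eV : V =i take (m - b) s ++ drop (m - b) s.
  by move=> x; rewrite cat_take_drop (perm_mem ps).
have ltV x y : x \in take (m - b) s -> y \in drop (m - b) s -> x < y.
  by apply: take_drop_lt; rewrite sort_lt_sorted.
have := numAP_cat_le uV eV ltV (ltn0Sn c) (ltn0Sn 0).
rewrite addn1 => /leq_trans; apply.
rewrite (maxAP_peel (b := b)) //; last by left.
apply: leq_add.
  apply: leq_trans (IH _ isT (take_uniq _ us)) _.
  by rewrite size_takel // sm leq_subr.
apply: leq_trans (numAP2_le (drop_uniq _ us)) _.
by rewrite size_drop sm subKn // leq_div.
Qed.

Lemma ap_term_nat x d i : ap_term x%:R (x + d)%:R i = (x + i * d)%:R :> R.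
Proof. by rewrite /ap_term !natrD natrM; ring. Qed.

Lemma maxAP_le_numAP_iota c m : (0 < c)%N ->
  (maxAP c m <= numAP c.+1 [seq i%:R : R | i <- iota 0 m])%N.
Proof.
move=> c_gt0; rewrite maxAP_sum //.
set s := [seq (j, d) | j <- iota 0 m, d <- iota 1 (j %/ c)%N].
have -> : sumn [seq (j %/ c)%N | j <- iota 0 m] = count predT s.
  rewrite count_predT size_allpairs_dep; congr sumn.
  by apply: eq_map => j; rewrite size_iota.
have mem_s p : p \in s -> [/\ (0 < p.2)%N, (c * p.2 <= p.1)%N & (p.1 < m)%N].
  case/allpairsPdep => j [d [+ + ->]]; rewrite !mem_iota /= add1n ltnS.
  by move=> jm /andP[d_gt0]; rewrite leq_divRL // mulnC.
(* (j, d) stands for the progression with last term j and difference d. *)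
pose ap (p : nat * nat) : R * R := ((p.1 - c * p.2)%N%:R, (p.1 - c * p.2 + p.2)%N%:R).
rewrite numAPE; apply: (count_le_inj (f := ap)).
- apply: allpairs_uniq_dep => [|j _|]; rewrite ?iota_uniq //.
  by move=> [j d] [j' d'] _ _ [-> ->].
- move=> [j d] [j' d'] /mem_s[_ /= dj _] /mem_s[_ /= dj' _] [] /eqP + /eqP.
  rewrite !eqr_nat => /eqP e1 /eqP e2.
  have ed : d = d' by lia.
  by subst d'; congr pair; lia.
move=> [j d] /mem_s[] /= d_gt0 dj jm _.
have APjd : isAP c.+1 [seq i%:R : R | i <- iota 0 m] (ap (j, d)).
  apply/isAPP; split=> [|i ic] /=; first by rewrite ltr_nat; lia.
  rewrite ap_term_nat; apply: map_f; rewrite mem_iota /=.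
  by have := leq_mul (ic : (i <= c)%N) (leqnn d); lia.
by rewrite APjd andbT (isAP_pairs _ APjd).
Qed.

End Progressions.

Lemma optimalAP_of_bound (R : realFieldType) c (V A B : seq R) :
  (0 < c)%N -> optimalAP c.+2 V -> uniq A -> uniq B -> size V = (size A + size B)%N ->
  size B = (size V %/ c.+1)%N \/ size B = ((size V + c) %/ c.+1)%N ->
  (numAP c.+2 V <= numAP c.+1 A + numAP 2 B)%N -> optimalAP c.+1 A.
Proof.
move=> c_gt0 [uV optV] uA uB sV balB splitV; split=> // W uW sW.
have lowV : (maxAP c.+1 (size V) <= numAP c.+2 V)%N.
  apply: leq_trans (maxAP_le_numAP_iota R (size V) (ltn0Sn c)) (optV _ _ _).
    by rewrite map_inj_uniq ?iota_uniq // => i j /eqP; rewrite eqr_nat => /eqP.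
  by rewrite size_map size_iota.
have := leq_trans lowV (leq_trans splitV (leq_add (leqnn _) (numAP2_le uB))).
rewrite (maxAP_peel c_gt0 balB) {1}sV addnK leq_add2r => lowA.
by apply: leq_trans lowA; rewrite -sW numAP_le_maxAP.
Qed.

Local Notation blocks Vs a n := (flatten [seq Vs j | j <- iota a n]).

Lemma mem_blocksP (T : eqType) (Vs : nat -> seq T) a n x :
  reflect (exists2 j, (a <= j < a + n)%N & x \in Vs j) (x \in blocks Vs a n).
Proof.
by apply: (iffP flatten_mapP) => -[j jr xj]; exists j; rewrite ?mem_iota in jr *.
Qed.

Section OrderlyDecomposition.
Variables (R : realFieldType) (l : nat) (V : seq R) (Vs : nat -> seq R).
Hypothesis decV : orderly_decomp l V Vs.

Lemma uniq_blocks a n : (a + n <= l)%N -> uniq (blocks Vs a n).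
Proof.
have [uVs ltVs _] := decV.
elim: n a => [//|n IH] a an /=; rewrite cat_uniq uVs ?IH ?andbT; try lia.
apply/hasPn => y /mem_blocksP[j jr yj]; apply/negP => ya.
have /andP[aj jl] : (a < j < l)%N by apply/andP; split; lia.
by have := ltVs a j aj jl y y ya yj; rewrite ltxx.
Qed.

Lemma uniq_orderly_decomp : uniq (blocks Vs 0 l).
Proof. exact: uniq_blocks. Qed.

Lemma size_orderly_decomp : uniq V -> size V = size (blocks Vs 0 l).
Proof.
move=> uV; have [_ _ eV] := decV.
by apply/perm_size/uniq_perm => //; apply: uniq_orderly_decomp.
Qed.

End OrderlyDecomposition.

Section BalancedDecomposition.
Variables (R : realFieldType) (c : nat) (V : seq R) (Vs : nat -> seq R).
Hypotheses (c_gt0 : (0 < c)%N) (optV : optimalAP c.+2 V)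
  (decV : orderly_decomp c.+1 V Vs) (balV : balanced_decomp c.+1 V Vs).

Lemma optimalAP_lower_blocks : optimalAP c.+1 (blocks Vs 0 c).
Proof.
have [uVs ltVs eV] := decV; have sV := size_orderly_decomp decV optV.1.
have eF : blocks Vs 0 c.+1 = blocks Vs 0 c ++ Vs c.
  by rewrite -addn1 iotaD map_cat flatten_cat /= cats0.
have := uniq_orderly_decomp decV; rewrite eF cat_uniq => /and3P[uA _ uB].
have ltAB x y : x \in blocks Vs 0 c -> y \in Vs c -> x < y.
  by case/mem_blocksP=> i /andP[_ ic]; apply: (ltVs _ _ ic (ltnSn c)).
rewrite eF in eV sV; apply: optimalAP_of_bound c_gt0 optV uA uB _ (balV (ltnSn c)) _.
  by rewrite sV size_cat. by have := numAP_cat_le optV.1 eV ltAB c_gt0 (ltn0Sn 0); rewrite addn1.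
Qed.

Lemma optimalAP_upper_blocks : optimalAP c.+1 (blocks Vs 1 c).
Proof.
have [uVs ltVs eV] := decV; have sV := size_orderly_decomp decV optV.1.
have := uniq_orderly_decomp decV; rewrite /= cat_uniq => /and3P[uB _ uA].
have ltBA x y : x \in Vs 0 -> y \in blocks Vs 1 c -> x < y.
  by move=> xB /mem_blocksP[j /andP[j_gt0 jc]]; apply: (ltVs 0 j j_gt0 jc) xB.
apply: optimalAP_of_bound c_gt0 optV uA uB _ (balV (ltn0Sn c)) _.
  by rewrite sV /= size_cat addnC. by have := numAP_cat_le optV.1 eV ltBA (ltn0Sn 0) c_gt0; rewrite add1n addnC.
Qed.

End BalancedDecomposition.

Theorem mainTheorem10 (R : realFieldType) (k : nat) (V : seq R) (Vs : nat -> seq R) :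
  (3 <= k)%N ->
  optimalAP k V ->
  orderly_decomp k.-1 V Vs ->
  balanced_decomp k.-1 V Vs ->
  optimalAP k.-1 (flatten [seq Vs j | j <- iota 0 k.-2]) /\
  optimalAP k.-1 (flatten [seq Vs j | j <- iota 1 k.-2]).
Proof.
case: k => [|[|[|c]]] // _ optV decV balV.
by split; [apply: optimalAP_lower_blocks balV | apply: optimalAP_upper_blocks balV].
Qed.
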